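(* Let $G$ be a finite group, $K$ an idempotent semifield, and $V$ an indecomposable representation of $G$ over $K$. Let $H\subseteq G$ be the stabilizer of some basis line of $V$ (so $H$ lies in the conjugacy class of subgroups corresponding to $V$), and pick a section $s:G/H\to G$ of the quotient map onto the set $G/H$ of left cosets. Then there is some $v\in V$ such that every element of $V$ can be written uniquely as $\sum_{g\in s(G/H)}a_g\,gv$ with $a_g\in K$. Moreover, every element of $V$ can be written uniquely as $\sum_{g\in G}a_g\,gv$ with $a_g\in K$ constant on left cosets, i.e. $a_{gh}=a_g$ for all $g\in G$, $h\in H$.
   Context: All semirings are commutative. A semifield is a semiring whose nonzero elements form a multiplicative group; idempotent means $a+a=a$ for all $a$. A representation of $G$ over $K$ is a $K$-linear action of $G$ on a free module $K^n$; it is indecomposable if it is not a direct sum of two nontrivial $G$-stable submodules. A basis line is a submodule spanned by a single vector of some basis; $G$ acts on basis lines by $g\cdot\mathrm{span}(v)=\mathrm{span}(gv)$. *)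

From HB Require Import structures.
From mathcomp Require Import all_boot all_order all_fingroup all_algebra.
Set Implicit Arguments. Unset Strict Implicit. Unset Printing Implicit Defensive.
Import GRing.Theory.
Local Open Scope ring_scope.

Definition is_semifield (K : comNzSemiRingType) : Prop :=
  forall x : K, x != 0 -> exists y : K, x * y = 1.

Definition is_idempotent (K : comNzSemiRingType) : Prop :=
  forall a : K, a + a = a.

Definition is_rep (K : comNzSemiRingType) (gT : finGroupType) (n : nat)
  (rho : gT -> 'M[K]_n) : Prop :=
  rho 1%g = 1%:M /\ forall g h : gT, rho (g * h)%g = rho g *m rho h.

Definition is_submod (K : comNzSemiRingType) (n : nat) (U : 'cV[K]_n -> Prop) :=
  [/\ U 0, (forall x y, U x -> U y -> U (x + y)) & (forall (a : K) x, U x -> U (a *: x))].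

Definition G_stable (K : comNzSemiRingType) (gT : finGroupType) (n : nat)
  (rho : gT -> 'M[K]_n) (U : 'cV[K]_n -> Prop) :=
  forall (g : gT) x, U x -> U (rho g *m x).

Definition nontrivial_submod (K : comNzSemiRingType) (n : nat) (U : 'cV[K]_n -> Prop) :=
  exists x, U x /\ x != 0.

Definition direct_sum (K : comNzSemiRingType) (n : nat) (U W : 'cV[K]_n -> Prop) :=
  (forall v, exists u w, [/\ U u, W w & v = u + w]) /\
  (forall u w u' w', U u -> W w -> U u' -> W w' -> u + w = u' + w' -> u = u' /\ w = w').

Definition indecomposable (K : comNzSemiRingType) (gT : finGroupType) (n : nat)
  (rho : gT -> 'M[K]_n) : Prop :=
  ~ exists U W : 'cV[K]_n -> Prop,
      [/\ is_submod U /\ is_submod W, G_stable rho U /\ G_stable rho W,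
          nontrivial_submod U /\ nontrivial_submod W & direct_sum U W].

Definition is_basis (K : comNzSemiRingType) (n : nat) (B : 'I_n -> 'cV[K]_n) : Prop :=
  (forall v, exists a : 'I_n -> K, v = \sum_(i < n) a i *: B i) /\
  (forall a a' : 'I_n -> K,
      \sum_(i < n) a i *: B i = \sum_(i < n) a' i *: B i -> forall i, a i = a' i).

Definition span1 (K : comNzSemiRingType) (n : nat) (b : 'cV[K]_n) : 'cV[K]_n -> Prop :=
  fun x => exists a : K, x = a *: b.

(* H is the stabilizer of the basis line span(b): g . span(b) = span(g b). *)
Definition line_stabilizer (K : comNzSemiRingType) (gT : finGroupType) (n : nat)
  (rho : gT -> 'M[K]_n) (b : 'cV[K]_n) (H : {set gT}) : Prop :=
  forall g : gT, g \in H <-> (forall x, span1 (rho g *m b) x <-> span1 b x).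

(* In an idempotent semifield a sum is nonzero as soon as one of its terms is,
   and a product of nonzero elements is nonzero.  Hence an invertible matrix has
   exactly one nonzero entry in each column: basis vectors are monomial and every
   rho g permutes the coordinates.  Indecomposability makes this permutation
   action transitive, and H is the stabilizer of the coordinate k supporting
   b = B i0, so rho g b is monomial at a coordinate depending only on gH.
   For a family of monomial vectors whose supports cover all coordinates,
   coefficients constant on the fibres of the support map correspond bijectively
   to vectors: the coordinate at l is the common coefficient times the nonzero
   sum of the family's entries at l.  The fibres are singletons for the family
   rho (s C) b and the cosets gH for the family rho g b. *)

From HB Require Import structures.
From mathcomp Require Import all_boot all_order all_fingroup all_algebra.
Set Implicit Arguments. Unset Strict Implicit. Unset Printing Implicit Defensive.
Import GRing.Theory.
Local Open Scope ring_scope.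

Section IdempotentSemifield.

Variable K : comNzSemiRingType.
Hypotheses (K_idem : is_idempotent K) (K_semifield : is_semifield K).

Lemma addr_eq0_idem (a b : K) : a + b = 0 -> a = 0.
Proof. by move=> ab0; rewrite -[a]addr0 -ab0 addrA K_idem. Qed.

Lemma sumr_neq0_idem (I : finType) (P : pred I) (F : I -> K) i :
  P i -> F i != 0 -> \sum_(j | P j) F j != 0.
Proof.
move=> Pi; apply: contra_neq; rewrite (bigD1 i) //=; exact: addr_eq0_idem.
Qed.

Lemma sumr_neq0_exists (I : finType) (P : pred I) (F : I -> K) :
  \sum_(i | P i) F i != 0 -> exists2 i, P i & F i != 0.
Proof.
move=> sum_neq0; have [i /andP [Pi Fi]|none] := pickP (fun i => P i && (F i != 0)).
  by exists i.
case/eqP: sum_neq0; apply: big1 => i Pi.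
by move: (none i); rewrite Pi => /negbFE /eqP.
Qed.

Lemma mulf_neq0_sf (a b : K) : (a * b != 0) = (a != 0) && (b != 0).
Proof.
have [->|a0] := eqVneq a 0; first by rewrite mul0r eqxx.
have [->|b0] := eqVneq b 0; first by rewrite mulr0 eqxx.
have [c ac1] := K_semifield a0; apply/idP; apply: contra_neq b0 => ab0.
by rewrite -[b]mul1r -ac1 (mulrC a) -mulrA ab0 mulr0.
Qed.

Lemma mulIf_sf (c a a' : K) : c != 0 -> a * c = a' * c -> a = a'.
Proof.
by move=> /K_semifield [d cd1] e; rewrite -[a]mulr1 -cd1 mulrA e -mulrA cd1 mulr1.
Qed.

Lemma divr_exists (c v : K) : c != 0 -> exists d, d * c = v.
Proof.
by move=> /K_semifield [d cd1]; exists (v * d); rewrite -mulrA (mulrC d) cd1 mulr1.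
Qed.

Section Monomial.

Variable n : nat.
Implicit Types (x y : 'cV[K]_n) (M N : 'M[K]_n) (sigma tau : 'I_n -> 'I_n) (S : {set 'I_n}).

Definition monomial_at x (l : 'I_n) := forall i, (x i 0 != 0) = (i == l).

Definition monomial_mx M sigma := forall l m, (M l m != 0) = (l == sigma m).

Definition mx_col_supp M (m : 'I_n) : 'I_n := odflt m [pick l | M l m != 0].

Lemma monomial_at_eq0 x l i : monomial_at x l -> i != l -> x i 0 = 0.
Proof. by move=> xl il; apply/eqP; rewrite -[_ == 0]negbK xl. Qed.

Lemma monomial_mx_uniq M sigma tau :
  monomial_mx M sigma -> monomial_mx M tau -> sigma =1 tau.
Proof. by move=> Ms Mt m; have := Ms (sigma m) m; rewrite Mt eqxx => /eqP. Qed.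

(* The entry of N *m M on the diagonal is 1, hence some product N m l * M l m
   is nonzero; a second nonzero entry M l' m would make (M *m N) l' l nonzero. *)
Lemma unit_monomial_mx M N :
  M *m N = 1%:M -> N *m M = 1%:M -> monomial_mx M (mx_col_supp M).
Proof.
move=> MN NM l m.
have : (N *m M) m m != 0 by rewrite NM mxE eqxx mulr1n oner_neq0.
rewrite mxE => /sumr_neq0_exists [l0 _]; rewrite mulf_neq0_sf => /andP [Nml0 Ml0m].
have col_uniq l' : M l' m != 0 -> l' = l0.
  move=> Ml'm; apply/eqP/negPn/negP => l'l0.
  have : (M *m N) l' l0 != 0.
    by rewrite mxE (sumr_neq0_idem (i := m)) // mulf_neq0_sf Ml'm.
  by rewrite MN mxE (negbTE l'l0) mulr0n eqxx.
rewrite /mx_col_supp; case: pickP => [l1 /col_uniq -> | none]; last first.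
  by have := none l0; rewrite Ml0m.
by apply/idP/eqP => [/col_uniq | ->].
Qed.

Lemma mulmx_monomial M sigma x m :
  monomial_mx M sigma -> monomial_at x m -> monomial_at (M *m x) (sigma m).
Proof.
move=> Ms xm i; rewrite mxE (bigD1 m) //= big1 ?addr0.
  by rewrite mulf_neq0_sf Ms (xm m) eqxx andbT.
by move=> r rm; rewrite (monomial_at_eq0 xm rm) mulr0.
Qed.

Lemma mulmx_monomial_mx M N sigma tau :
  monomial_mx M sigma -> monomial_mx N tau -> monomial_mx (M *m N) (sigma \o tau).
Proof.
move=> Ms Nt l m.
have colN : monomial_at (col m N) (tau m) by move=> i; rewrite mxE Nt.
have -> : (M *m N) l m = (M *m col m N) l 0.
  by rewrite !mxE; apply: eq_bigr => r _; rewrite mxE.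
exact: (mulmx_monomial Ms colN l).
Qed.

Lemma monomial_scale x y l :
  monomial_at x l -> monomial_at y l -> exists c, x = c *: y.
Proof.
move=> xl yl; have [c cy] : exists c, c * y l 0 = x l 0 by apply: divr_exists; rewrite yl.
exists c; apply/matrixP => i j; rewrite ord1 mxE.
have [->|il] := eqVneq i l; first by rewrite cy.
by rewrite (monomial_at_eq0 xl il) (monomial_at_eq0 yl il) mulr0.
Qed.

Lemma span1_monomial x y l l' : monomial_at x l -> monomial_at y l' ->
  (forall z, span1 x z <-> span1 y z) <-> l = l'.
Proof.
move=> xl yl'; split=> [span_eq | ll'].
  have [a ya] : span1 x y by apply/span_eq; exists 1; rewrite scale1r.
  by have := yl' l'; rewrite eqxx ya mxE mulf_neq0_sf xl => /andP [_ /eqP].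
subst l'; have [c xc] := monomial_scale xl yl'; have [d yd] := monomial_scale yl' xl.
by move=> z; split=> [[a ->]|[a ->]];
  [exists (a * c); rewrite xc scalerA | exists (a * d); rewrite yd scalerA].
Qed.

Definition basis_mx (B : 'I_n -> 'cV[K]_n) : 'M[K]_n := \matrix_(l, i) B i l 0.

Lemma basis_mx_mulE B p (X : 'M[K]_(n, p)) r m :
  (basis_mx B *m X) r m = (\sum_i X i m *: B i) r 0.
Proof. by rewrite mxE summxE; apply: eq_bigr => i _; rewrite !mxE mulrC. Qed.

Lemma basis_mx_inj B p (X Y : 'M[K]_(n, p)) :
  is_basis B -> basis_mx B *m X = basis_mx B *m Y -> X = Y.
Proof.
case=> _ uniqB BXY; apply/matrixP => i m.
apply: (uniqB (fun i => X i m) (fun i => Y i m)); apply/matrixP => r c.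
by rewrite ord1 -!basis_mx_mulE BXY.
Qed.

Lemma basis_mx_unit B :
  is_basis B -> exists A, basis_mx B *m A = 1%:M /\ A *m basis_mx B = 1%:M.
Proof.
move=> hB; have [a ea] := fin_all_exists (fun l => hB.1 (delta_mx l 0)).
have BA : basis_mx B *m \matrix_(i, l) a l i = 1%:M.
  apply/matrixP => r l; rewrite basis_mx_mulE.
  under eq_bigr do rewrite mxE.
  by rewrite -ea !mxE andbT.
exists (\matrix_(i, l) a l i); split=> //.
by apply: (basis_mx_inj hB); rewrite mulmxA BA mulmx1 mul1mx.
Qed.

Lemma basis_monomial B i0 : is_basis B -> exists k, monomial_at (B i0) k.
Proof.
move=> /basis_mx_unit [A [BA AB]]; exists (mx_col_supp (basis_mx B) i0) => l.
by rewrite -(unit_monomial_mx BA AB) mxE.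
Qed.

Definition coord_subspace (S : {set 'I_n}) : 'cV[K]_n -> Prop :=
  fun x => forall l, l \notin S -> x l 0 = 0.

Lemma coord_subspace_submod S : is_submod (coord_subspace S).
Proof.
by split=> [l _|x y xS yS l lS|a x xS l lS]; rewrite mxE ?xS ?yS ?addr0 ?mulr0.
Qed.

Lemma coord_subspace_nontrivial S l : l \in S -> nontrivial_submod (coord_subspace S).
Proof.
move=> lS; exists (delta_mx l 0); split.
  move=> m mS; rewrite mxE; case: eqP => [ml|_]; last by rewrite mulr0n.
  by move: mS; rewrite ml lS.
by apply/eqP => /matrixP /(_ l 0) /eqP; rewrite !mxE !eqxx oner_eq0.
Qed.

Lemma coord_subspace_direct_sum S :
  direct_sum (coord_subspace S) (coord_subspace (~: S)).
Proof.
split=> [x|u w u' w' uS wS u'S w'S e].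
  exists (\matrix_(i, c) if i \in S then x i c else 0).
  exists (\matrix_(i, c) if i \in S then 0 else x i c).
  split=> [l lS|l|]; first by rewrite mxE (negbTE lS).
    by rewrite inE negbK => lS; rewrite mxE lS.
  by apply/matrixP => i c; rewrite !mxE; case: (i \in S); rewrite ?addr0 ?add0r.
have coord_eq i : u i 0 + w i 0 = u' i 0 + w' i 0.
  by have := congr1 (fun v : 'cV[K]_n => v i 0) e; rewrite !mxE.
split; apply/matrixP => i c; rewrite ord1; have := coord_eq i;
  have [iS|iS] := boolP (i \in S).
- by rewrite wS ?w'S ?inE ?iS // !addr0.
- by rewrite uS ?u'S.
- by rewrite wS ?w'S ?inE ?iS // !addr0 => _; rewrite wS ?w'S ?inE ?iS.
- by rewrite uS ?u'S // !add0r.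
Qed.

Lemma monomial_coord_stable M sigma S : monomial_mx M sigma ->
  (forall m, m \in S -> sigma m \in S) ->
  forall x, coord_subspace S x -> coord_subspace S (M *m x).
Proof.
move=> Ms sigmaS x xS l lS; rewrite mxE big1 // => m _.
have [mS|mS] := boolP (m \in S); last by rewrite xS ?mulr0.
have /eqP -> : M l m == 0.
  by rewrite -[_ == 0]negbK Ms; apply: contraNneq lS => ->; apply: sigmaS.
by rewrite mul0r.
Qed.

End Monomial.

Section MonomialFamily.

Variables (n : nat) (I : finType) (P : pred I) (w : I -> 'cV[K]_n) (f : I -> 'I_n).
Hypotheses (w_monomial : forall i, P i -> monomial_at (w i) (f i))
           (f_onto : forall l, exists2 i, P i & f i = l).

Definition fiber_const (a : I -> K) :=
  forall i i', P i -> P i' -> f i = f i' -> a i = a i'.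

Let fiber_weight l := \sum_(i | P i && (f i == l)) w i l 0.

Lemma fiber_weight_neq0 l : fiber_weight l != 0.
Proof.
have [i Pi fil] := f_onto l; apply: (sumr_neq0_idem (i := i)).
  by rewrite Pi fil eqxx.
by rewrite (w_monomial Pi) fil.
Qed.

Lemma monomial_family_coord a i0 : fiber_const a -> P i0 ->
  (\sum_(i | P i) a i *: w i) (f i0) 0 = a i0 * fiber_weight (f i0).
Proof.
move=> ac Pi0; rewrite summxE mulr_sumr big_mkcondr /=; apply: eq_bigr => i Pi.
rewrite mxE; case: eqP => [fi | /eqP fi]; first by rewrite (ac i0 i).
by rewrite (monomial_at_eq0 (w_monomial Pi)) ?mulr0 // eq_sym.
Qed.

Lemma monomial_family_span v :
  exists2 a, fiber_const a & v = \sum_(i | P i) a i *: w i.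
Proof.
have [d dE] := fin_all_exists (fun l => divr_exists (v l 0) (fiber_weight_neq0 l)).
exists (fun i => d (f i)) => [i i' _ _ -> //|].
apply/matrixP => l c; rewrite ord1; have [i Pi <-] := f_onto l.
by rewrite monomial_family_coord // => i1 i2 _ _ ->.
Qed.

Lemma monomial_family_unique a a' : fiber_const a -> fiber_const a' ->
  \sum_(i | P i) a i *: w i = \sum_(i | P i) a' i *: w i ->
  forall i, P i -> a i = a' i.
Proof.
move=> ac a'c e i Pi; apply: (mulIf_sf (fiber_weight_neq0 (f i))).
by rewrite -!monomial_family_coord // e.
Qed.

End MonomialFamily.

Section MonomialRep.

Variables (gT : finGroupType) (n : nat) (rho : gT -> 'M[K]_n).
Hypothesis rho_rep : is_rep rho.

Definition rep_perm g := mx_col_supp (rho g).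

Lemma rep_monomial g : monomial_mx (rho g) (rep_perm g).
Proof.
case: rho_rep => rho1 rhoM.
by apply: (unit_monomial_mx (N := rho g^-1)); rewrite -rhoM ?mulgV ?mulVg rho1.
Qed.

Lemma rep_perm1 m : rep_perm 1 m = m.
Proof.
have id_monomial : monomial_mx (rho 1) id.
  by move=> l m'; rewrite rho_rep.1 mxE; case: (l == m'); rewrite ?oner_neq0 ?eqxx.
exact: (monomial_mx_uniq (rep_monomial 1) id_monomial).
Qed.

Lemma rep_permM g h m : rep_perm (g * h) m = rep_perm g (rep_perm h m).
Proof.
have := mulmx_monomial_mx (rep_monomial g) (rep_monomial h).
by rewrite -rho_rep.2 => /(monomial_mx_uniq (rep_monomial (g * h)))/(_ m).
Qed.

Lemma rep_permK g m : rep_perm g^-1 (rep_perm g m) = m.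
Proof. by rewrite -rep_permM mulVg rep_perm1. Qed.

Definition rep_orbit k := [set rep_perm g k | g : gT].

Lemma rep_orbit_stable k g m : (rep_perm g m \in rep_orbit k) = (m \in rep_orbit k).
Proof.
apply/imsetP/imsetP => [[h _ e]|[h _ ->]].
  by exists (g^-1 * h)%g; rewrite ?inE // rep_permM -e rep_permK.
by exists (g * h)%g; rewrite ?inE // rep_permM.
Qed.

(* The coordinate subspaces on an orbit and on its complement are G-stable
   and split K^n. *)
Lemma indecomposable_rep_perm_transitive :
  indecomposable rho -> forall k l, exists g, rep_perm g k = l.
Proof.
move=> rho_ind k l; have [/imsetP [g _ ->]|lS] := boolP (l \in rep_orbit k).
  by exists g.
case: rho_ind; exists (coord_subspace (rep_orbit k)), (coord_subspace (~: rep_orbit k)).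
split.
- by split; apply: coord_subspace_submod.
- by split=> g; apply: (monomial_coord_stable (rep_monomial g)) => m;
    rewrite ?inE rep_orbit_stable.
- split; first apply: (coord_subspace_nontrivial (l := k)).
    by apply/imsetP; exists 1%g; rewrite ?inE ?rep_perm1.
  by apply: (coord_subspace_nontrivial (l := l)); rewrite inE.
- exact: coord_subspace_direct_sum.
Qed.

Lemma line_stabilizer_rep_perm b k (H : {set gT}) :
  monomial_at b k -> line_stabilizer rho b H ->
  forall h, h \in H <-> rep_perm h k = k.
Proof.
move=> b_monomial H_stab h; apply: iff_trans (H_stab h) _.
exact: span1_monomial (mulmx_monomial (rep_monomial h) b_monomial) b_monomial.
Qed.

Section OrbitBasis.

Variables (b : 'cV[K]_n) (k : 'I_n) (H : {group gT}).
Hypotheses (b_monomial : monomial_at b k)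
           (H_stab : forall h, h \in H <-> rep_perm h k = k)
           (rep_perm_onto : forall l, exists g, rep_perm g k = l).

Let j g := rep_perm g k.

Lemma rep_perm_mulr_stab g h : h \in H -> j (g * h)%g = j g.
Proof. by move=> /H_stab hk; rewrite /j rep_permM hk. Qed.

Lemma rep_perm_eq_stab g g' : j g = j g' -> (g^-1 * g')%g \in H.
Proof. by move=> e; apply/H_stab; rewrite rep_permM -/(j g') -e rep_permK. Qed.

Lemma rep_perm_lcoset g x : x \in (g *: H)%g -> j x = j g.
Proof. by rewrite mem_lcoset => /(rep_perm_mulr_stab g); rewrite mulKVg. Qed.

Lemma orbit_monomial g : monomial_at (rho g *m b) (j g).
Proof. exact: mulmx_monomial (rep_monomial g) b_monomial. Qed.

Lemma lcoset_orbit_basis (s : {set gT} -> gT)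
    (hs : forall C, C \in lcosets H [set: gT] -> s C \in C) :
  (forall v : 'cV[K]_n, exists a : {set gT} -> K,
     v = \sum_(C in lcosets H [set: gT]) a C *: (rho (s C) *m b)) /\
  (forall a a' : {set gT} -> K,
     \sum_(C in lcosets H [set: gT]) a C *: (rho (s C) *m b) =
     \sum_(C in lcosets H [set: gT]) a' C *: (rho (s C) *m b) ->
     forall C, C \in lcosets H [set: gT] -> a C = a' C).
Proof.
set L := lcosets H [set: gT].
have gH_L g : (g *: H)%g \in L by apply/lcosetsP; exists g; rewrite ?inE.
have s_lcoset g : j (s (g *: H)%g) = j g by apply/rep_perm_lcoset/hs.
have s_inj : {in L &, injective (fun C => j (s C))}.
  move=> _ _ /lcosetsP [x _ ->] /lcosetsP [y _ ->] /=; rewrite !s_lcoset.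
  by move/rep_perm_eq_stab; rewrite -mem_lcoset => /lcoset_eqP.
have w_monomial C : C \in L -> monomial_at (rho (s C) *m b) (j (s C)).
  by move=> _; apply: orbit_monomial.
have onto l : exists2 C, C \in L & j (s C) = l.
  by have [g <-] := rep_perm_onto l; exists (g *: H)%g.
have L_const a : fiber_const (fun C => C \in L) (fun C => j (s C)) a.
  by move=> C C' hC hC' /s_inj -> .
split=> [v | a a' e C hC].
  by have [a _ ->] := monomial_family_span w_monomial onto v; exists a.
exact: (monomial_family_unique w_monomial onto (L_const a) (L_const a') e).
Qed.

Lemma group_orbit_basis :
  (forall v : 'cV[K]_n, exists a : gT -> K,
     (forall g h, h \in H -> a (g * h)%g = a g) /\
     v = \sum_(g : gT) a g *: (rho g *m b)) /\
  (forall a a' : gT -> K,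
     (forall g h, h \in H -> a (g * h)%g = a g) ->
     (forall g h, h \in H -> a' (g * h)%g = a' g) ->
     \sum_(g : gT) a g *: (rho g *m b) = \sum_(g : gT) a' g *: (rho g *m b) ->
     forall g, a g = a' g).
Proof.
have w_monomial g : xpredT g -> monomial_at (rho g *m b) (j g).
  by move=> _; apply: orbit_monomial.
have onto l : exists2 g, xpredT g & j g = l.
  by have [g <-] := rep_perm_onto l; exists g.
have constP a : fiber_const xpredT j a <-> forall g h, h \in H -> a (g * h)%g = a g.
  split=> [ac g h hH | ac g g' _ _ /rep_perm_eq_stab hH].
    by apply: ac; rewrite ?rep_perm_mulr_stab.
  by rewrite -(mulKVg g g') ac.
split=> [v | a a' /constP ac /constP a'c e g].
  have [a /constP ac ->] := monomial_family_span w_monomial onto v.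
  by exists a.
exact: (monomial_family_unique w_monomial onto ac a'c e).
Qed.

End OrbitBasis.

End MonomialRep.

End IdempotentSemifield.

Unset Implicit Arguments. Set Strict Implicit.

Theorem lemma3p16 (gT : finGroupType) (K : comNzSemiRingType) (n : nat)
  (rho : gT -> 'M[K]_n)
  (hK : is_semifield K) (hI : is_idempotent K)
  (hrep : is_rep rho) (hind : indecomposable rho)
  (B : 'I_n -> 'cV[K]_n) (hB : is_basis B) (i0 : 'I_n)
  (H : {group gT}) (hH : line_stabilizer rho (B i0) H)
  (s : {set gT} -> gT) (hs : forall C, C \in lcosets H [set: gT] -> s C \in C) :
  exists v : 'cV[K]_n,
    ((forall w : 'cV[K]_n, exists a : {set gT} -> K,
        w = \sum_(C in lcosets H [set: gT]) a C *: (rho (s C) *m v)) /\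
     (forall a a' : {set gT} -> K,
        \sum_(C in lcosets H [set: gT]) a C *: (rho (s C) *m v) =
        \sum_(C in lcosets H [set: gT]) a' C *: (rho (s C) *m v) ->
        forall C, C \in lcosets H [set: gT] -> a C = a' C)) /\
    ((forall w : 'cV[K]_n, exists a : gT -> K,
        (forall g h, h \in H -> a (g * h)%g = a g) /\
        w = \sum_(g : gT) a g *: (rho g *m v)) /\
     (forall a a' : gT -> K,
        (forall g h, h \in H -> a (g * h)%g = a g) ->
        (forall g h, h \in H -> a' (g * h)%g = a' g) ->
        \sum_(g : gT) a g *: (rho g *m v) = \sum_(g : gT) a' g *: (rho g *m v) ->
        forall g, a g = a' g)).
Proof.
have [k b_monomial] := basis_monomial hI hK i0 hB.
have H_stab := line_stabilizer_rep_perm hI hK hrep b_monomial hH.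
have onto := indecomposable_rep_perm_transitive hI hK hrep hind k.
exists (B i0); split.
  exact: (lcoset_orbit_basis hI hK hrep b_monomial H_stab onto hs).
exact: (group_orbit_basis hI hK hrep b_monomial H_stab onto).
Qed.
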